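(* Suppose $f \in \mathbb{C}[x_1,\dots,x_n]_d$ has a local border decomposition with $r$ summands based at $[\ell]$, where $\ell\in\mathbb{C}[x_1,\dots,x_n]_1$ is nonzero. If $d \ge r-1$, then $f = \ell^{d-r+1} g$ for some homogeneous polynomial $g$ of degree $r-1$.
   Context: Let $\mathbb{C}(\epsilon)[\boldsymbol{x}]_1$ be the set of linear forms in $x_1,\dots,x_n$ with coefficients rational functions of $\epsilon$. A nonzero $\ell(\epsilon)\in\mathbb{C}(\epsilon)[\boldsymbol{x}]_1$ can be expanded as a Laurent series $\ell(\epsilon)=\sum_{i\ge q}\epsilon^i \ell_i$ with $\ell_i\in\mathbb{C}[\boldsymbol{x}]_1$, $\ell_q\neq 0$; its projective limit is $\lim_{\epsilon\to0}[\ell(\epsilon)] := [\ell_q]$. A local border decomposition of $f$ with $r$ summands based at $[\ell]$ is an expression $f=\lim_{\epsilon\to0}\sum_{k=1}^r \ell_k^d$ (limit taken coefficientwise) with $\ell_k\in\mathbb{C}(\epsilon)[\boldsymbol{x}]_1$ and $\lim_{\epsilon\to0}[\ell_k(\epsilon)]=[\ell]$ for all $k$. *)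

From HB Require Import structures.
From mathcomp Require Import all_boot all_algebra.
From mathcomp Require Import fraction complex.
From mathcomp Require Import Rstruct.
From mathcomp Require Import mpoly.
Set Implicit Arguments. Unset Strict Implicit. Unset Printing Implicit Defensive.
Import GRing.Theory.
Local Open Scope ring_scope.

Definition CC : numClosedFieldType := (Rdefinitions.R)[i].

Definition Ceps : fieldType := {fraction {poly CC}}.

Definition eps : Ceps := @FracField.tofrac {poly CC} 'X.

Definition fr (p : {poly CC}) : Ceps := @FracField.tofrac {poly CC} p.

Definition linform (R : comNzRingType) (n : nat) (v : 'I_n -> R) : {mpoly R[n]} :=
  \sum_(i < n) v i *: 'X_i.

(* lim_{eps -> 0} r = c for r in C(eps): the Laurent expansion of r has
   only nonnegative powers of eps and constant term c; equivalently
   r = a/b with a, b in C[eps], b(0) <> 0, and c = a(0)/b(0). *)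
Definition lim0 (r : Ceps) (c : CC) : Prop :=
  exists a b : {poly CC},
    b.[0] != 0 /\ r = fr a / fr b /\ c = a.[0] / b.[0].

(* laurent_lead v q w : the linear form v (coefficient vector over C(eps))
   has Laurent expansion  v = sum_{i >= q} eps^i v_i  with v_q = w <> 0.
   Written out: v = eps^q * a / b with a a vector of polynomials in eps,
   b a polynomial with b(0) <> 0, and w = a(0)/b(0) nonzero. *)
Definition laurent_lead (n : nat) (v : 'I_n -> Ceps) (q : int) (w : 'I_n -> CC)
  : Prop :=
  (exists i, w i != 0) /\
  exists (a : 'I_n -> {poly CC}) (b : {poly CC}),
    [/\ b.[0] != 0,
        (forall i, v i = eps ^ q * (fr (a i) / fr b)) &
        (forall i, w i = (a i).[0] / b.[0])].

(* lim_{eps->0} [v(eps)] = [l] in projective space: the lowest Laurent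
   coefficient v_q is a nonzero scalar multiple of l. *)
Definition proj_lim (n : nat) (v : 'I_n -> Ceps) (l : 'I_n -> CC) : Prop :=
  exists (q : int) (w : 'I_n -> CC) (c : CC),
    [/\ laurent_lead v q w, c != 0 & forall i, w i = c * l i].

(* A local border decomposition of f with r summands based at [l]:
   f = lim_{eps->0} sum_{k<r} (L_k)^d coefficientwise, with each
   lim [L_k(eps)] = [l]. *)
Definition local_border_decomp (n d r : nat) (f : {mpoly CC[n]})
  (l : 'I_n -> CC) : Prop :=
  exists L : 'I_r -> 'I_n -> Ceps,
    (forall k, proj_lim (L k) l) /\
    (forall m : 'X_{1..n},
        lim0 ((\sum_(k < r) linform (L k) ^+ d)@_m) f@_m).

From HB Require Import structures.
From mathcomp Require Import all_boot all_algebra.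
From mathcomp Require Import fraction complex.
From mathcomp Require Import Rstruct.
From mathcomp Require Import mpoly ring zify.
Import GRing.Theory Num.Theory.
Local Open Scope ring_scope.

Set Implicit Arguments. Unset Strict Implicit. Unset Printing Implicit Defensive.

(* Write each summand as L_k(eps) = eps^(q_k) a_k(eps) / b_k(eps), where a_k(0) is a
   nonzero multiple of l.  Any v annihilating l can be perturbed to u(eps) -> v
   annihilating L_k.  Hence for v_1, ..., v_r annihilating l there are u_k(eps) -> v_k
   such that D_(u_1) ... D_(u_r) kills every L_k^d; letting eps -> 0 coefficientwise,
   D_(v_1) ... D_(v_r) f = 0.  After the linear change of coordinates that turns l into
   x_i0, this says that every r-th partial derivative of f in the variables other than
   x_i0 vanishes, so every monomial of f has x_i0-degree at least d - r + 1. *)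

Lemma sum_delta (V : nmodType) n (F : 'I_n -> V) j :
  \sum_(i < n) F i *+ (i == j) = F j.
Proof. by rewrite (bigD1 j) //= eqxx mulr1n big1 ?addr0 // => i /negPf ->. Qed.

Section DirectionalDerivative.
Variables (R : comNzRingType) (n : nat).
Implicit Types (p q : {mpoly R[n]}) (u v : 'I_n -> R).

Definition dot u v : R := \sum_(i < n) u i * v i.

Definition dderiv v p : {mpoly R[n]} := \sum_(i < n) v i *: p^`M(i).

Lemma dderiv_is_linear v : linear (dderiv v).
Proof.
move=> c p q; rewrite /dderiv scaler_sumr -big_split; apply: eq_bigr => i _ /=.
by rewrite linearP scalerDr !scalerA mulrC.
Qed.

HB.instance Definition _ v := GRing.isLinear.Build R {mpoly R[n]} {mpoly R[n]}
  _ (dderiv v) (dderiv_is_linear v).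

Lemma dderivC v c : dderiv v c%:MP = 0.
Proof. by rewrite /dderiv big1 // => i _; rewrite mderivC scaler0. Qed.

Lemma dderivM v p q : dderiv v (p * q) = dderiv v p * q + p * dderiv v q.
Proof.
rewrite /dderiv mulr_suml mulr_sumr -big_split; apply: eq_bigr => i _ /=.
by rewrite mderivM scalerDr -scalerAl -scalerAr.
Qed.

Lemma dderiv_exp v p k : dderiv v (p ^+ k) = p ^+ k.-1 * dderiv v p *+ k.
Proof.
elim: k => [|k IHk]; first by rewrite expr0 -mpolyC1 dderivC mulr0n.
rewrite exprS dderivM IHk -mulrnAr mulrA -exprS.
case: k {IHk} => [|k] /=; first by rewrite expr0 mulr1 mulr0n mulr0 addr0 mul1r.
by rewrite mulrC -mulrnAr -mulrDr -mulrS.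
Qed.

Lemma mderivXU (i j : 'I_n) : ('X_j : {mpoly R[n]})^`M(i) = (j == i)%:R%:MP.
Proof.
rewrite mderivX mnm1E; case: eqP => [->|_]; last by rewrite scale0r mpolyC0.
by rewrite -{1}[U_(i)%MM]add0m addmK mpolyX0 scale1r mpolyC1.
Qed.

Lemma mderiv_linform v i : (linform v)^`M(i) = (v i)%:MP.
Proof.
rewrite /linform raddf_sum (bigD1 i) //= big1 => [|j /negPf ji].
  by rewrite addr0 mderivZ mderivXU eqxx -mul_mpolyC mulr1.
by rewrite mderivZ mderivXU ji mpolyC0 scaler0.
Qed.

Lemma dderiv_linform u v : dderiv u (linform v) = (dot u v)%:MP.
Proof.
rewrite /dderiv /dot raddf_sum; apply: eq_bigr => i _.
by rewrite mderiv_linform -mul_mpolyC -mpolyCM.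
Qed.

Definition iter_dderiv (vs : seq ('I_n -> R)) p := foldr dderiv p vs.

Lemma iter_dderiv_sum vs (I : Type) (s : seq I) (P : pred I) (F : I -> {mpoly R[n]}) :
  iter_dderiv vs (\sum_(i <- s | P i) F i) = \sum_(i <- s | P i) iter_dderiv vs (F i).
Proof. by elim: vs => //= v vs ->; rewrite raddf_sum. Qed.

Lemma iter_dderiv_linform_exp vs v d :
  exists2 c : R, iter_dderiv vs (linform v ^+ d) = c *: linform v ^+ (d - size vs)
               & has (fun u => dot u v == 0) vs -> c = 0.
Proof.
elim: vs => [|u vs [c IH c0]]; first by exists 1; rewrite ?scale1r ?subn0.
exists (c * dot u v *+ (d - size vs)); last first.
  by case/orP => [/eqP ->|/c0 ->]; rewrite ?mulr0 ?mul0r mul0rn.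
rewrite [LHS]/= -/(iter_dderiv vs _) IH linearZ /= dderiv_exp dderiv_linform subnS /=.
by rewrite mulrC mul_mpolyC -scalerMnl -scalerMnr scalerA.
Qed.

End DirectionalDerivative.

Section ChainRule.
Variables (R : comNzRingType) (n k : nat) (lq : n.-tuple {mpoly R[k]}).

Lemma mderiv_comp (p : {mpoly R[n]}) j :
  (p \mPo lq)^`M(j) = \sum_(i < n) (p^`M(i) \mPo lq) * (tnth lq i)^`M(j).
Proof.
pose chain q := (q \mPo lq)^`M(j) = \sum_(i < n) (q^`M(i) \mPo lq) * (tnth lq i)^`M(j).
have chain0 : chain 0.
  by rewrite /chain raddf0 mderiv0 big1 // => i _; rewrite mderiv0 raddf0 mul0r.
have chain1 : chain 1.
  by rewrite /chain rmorph1 -mpolyC1 mderivC big1 // => i _; rewrite mderivC raddf0 mul0r.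
have chainX i : chain 'X_i.
  rewrite /chain comp_mpolyXU -tnth_nth (bigD1 i) //= big1 => [|i' /negPf ii'].
    by rewrite mderivXU eqxx comp_mpolyC mpolyC1 mul1r addr0.
  by rewrite mderivXU eq_sym ii' comp_mpolyC mpolyC0 mul0r.
have chainM q1 q2 : chain q1 -> chain q2 -> chain (q1 * q2).
  rewrite /chain rmorphM mderivM => -> ->.
  rewrite mulr_suml mulr_sumr -big_split; apply: eq_bigr => i _ /=.
  rewrite mderivM raddfD /= !(rmorphM (comp_mpoly lq)) mulrDl.
  by congr (_ + _); [exact: mulrAC | exact: mulrA].
have chainDZ c q1 q2 : chain q1 -> chain q2 -> chain (c *: q1 + q2).
  rewrite /chain linearP /= mderivD mderivZ => -> ->.
  rewrite scaler_sumr -big_split; apply: eq_bigr => i _ /=.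
  by rewrite mderivD mderivZ linearP /= mulrDl scalerAl.
elim/mpolyind: p => [|c m p _ _ IHp]; first exact: chain0.
apply: (chainDZ _ _ _ _ IHp); rewrite mpolyXE_id.
elim/big_rec: _ => [|i P _ IHP]; first exact: chain1.
apply: (chainM _ _ _ IHP); elim: (m i) => [|e IHe]; first by rewrite expr0.
by rewrite exprS; exact: chainM (chainX i) IHe.
Qed.

Lemma dderiv_comp v (p : {mpoly R[n]}) j :
  (forall i, (tnth lq i)^`M(j) = (v i)%:MP) -> (p \mPo lq)^`M(j) = dderiv v p \mPo lq.
Proof.
move=> lqj; rewrite mderiv_comp /dderiv raddf_sum; apply: eq_bigr => i _ /=.
by rewrite lqj mulrC mul_mpolyC linearZ.
Qed.

End ChainRule.

Section Substitution.
Variables (R : comNzRingType) (n : nat).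
Implicit Types (p Y : {mpoly R[n]}) (v : 'I_n -> R).

Lemma comp_mpolyA k m p (lq : n.-tuple {mpoly R[k]}) (lr : k.-tuple {mpoly R[m]}) :
  (p \mPo lq) \mPo lr = p \mPo [tuple tnth lq i \mPo lr | i < n].
Proof.
elim/mpolyind: p => [|c mu p _ _ IHp]; first by rewrite !raddf0.
rewrite !raddfD /= IHp !comp_mpolyZ !comp_mpolyX rmorph_prod; congr (_ *: _ + _).
by apply: eq_bigr => i _; rewrite rmorphXn tnth_mktuple.
Qed.

Lemma comp_mpoly_dhomog k (lq : n.-tuple {mpoly R[k]}) p d :
  (forall i, tnth lq i \is 1.-homog) -> p \is d.-homog -> p \mPo lq \is d.-homog.
Proof.
move=> lq1 /dhomogP pd; rewrite comp_mpolyE big_seq; apply: rpred_sum => mu /pd <-.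
apply: rpredZ; suff: \prod_(i < n) tnth lq i ^+ mu i \is (\sum_(i < n) mu i).-homog.
  by rewrite -mdegE.
elim/big_rec2: _ => [|i e P _ Pe]; first exact: dhomog1.
by apply: dhomogM Pe; have := dhomogMn (mu i) (lq1 i); rewrite mul1n.
Qed.

Lemma X_dhomog i : ('X_i : {mpoly R[n]}) \is 1.-homog.
Proof. by rewrite dhomogX; apply/eqP; exact: mdeg1. Qed.

Lemma linform_dhomog v : linform v \is 1.-homog.
Proof. by apply: rpred_sum => i _; rewrite rpredZ ?X_dhomog. Qed.

Definition subst_at i0 Y : n.-tuple {mpoly R[n]} := [tuple 'X_i + (i == i0)%:R *: Y | i < n].

Lemma comp_subst_atX i0 Y i : 'X_i \mPo subst_at i0 Y = 'X_i + (i == i0)%:R *: Y.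
Proof. by rewrite comp_mpolyXU -tnth_nth tnth_mktuple. Qed.

Lemma comp_subst_at_linform i0 Y v : linform v \mPo subst_at i0 Y = linform v + v i0 *: Y.
Proof.
rewrite /linform raddf_sum /=.
under eq_bigr do rewrite comp_mpolyZ comp_subst_atX scalerDr scalerA mulr_natr.
by rewrite big_split /= -scaler_suml sum_delta.
Qed.

Lemma subst_at_dhomog i0 Y i : Y \is 1.-homog -> tnth (subst_at i0 Y) i \is 1.-homog.
Proof. by move=> Y1; rewrite tnth_mktuple rpredD ?rpredZ ?X_dhomog. Qed.

Lemma mderiv_subst_at i0 Y c i j : Y^`M(j) = c%:MP ->
  (tnth (subst_at i0 Y) i)^`M(j) = ((i == j)%:R + (i == i0)%:R * c)%:MP.
Proof.
by move=> Yj; rewrite tnth_mktuple mderivD mderivZ mderivXU Yj mpolyCD -mul_mpolyC mpolyCM.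
Qed.

End Substitution.

Section Straightening.
Variables (F : fieldType) (n : nat) (l : 'I_n -> F) (i0 : 'I_n).
Hypothesis li0 : l i0 != 0.

Definition X_to_lin := subst_at i0 (linform l - 'X_i0).
Definition lin_to_X := subst_at i0 ((l i0)^-1 *: ('X_i0 - linform l)).

Lemma comp_X_to_lin_X : 'X_i0 \mPo X_to_lin = linform l.
Proof. by rewrite comp_subst_atX eqxx scale1r addrC subrK. Qed.

Lemma comp_lin_to_XK p : (p \mPo lin_to_X) \mPo X_to_lin = p.
Proof.
have lin_to_X_i0 : (l i0)^-1 *: ('X_i0 - linform l) \mPo X_to_lin = - (linform l - 'X_i0).
  rewrite comp_mpolyZ raddfB /= comp_X_to_lin_X comp_subst_at_linform.
  by rewrite opprD addrA subrr add0r scalerN scalerA mulVf // scale1r.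
rewrite comp_mpolyA -[RHS]comp_mpoly_id; congr (_ \mPo _); apply: eq_from_tnth => i.
by rewrite !tnth_mktuple raddfD /= comp_mpolyZ lin_to_X_i0 comp_subst_atX scalerN addrK.
Qed.

Lemma X_to_lin_dhomog i : tnth X_to_lin i \is 1.-homog.
Proof. by rewrite subst_at_dhomog ?rpredB ?linform_dhomog ?X_dhomog. Qed.

Lemma lin_to_X_dhomog i : tnth lin_to_X i \is 1.-homog.
Proof. by rewrite subst_at_dhomog ?rpredZ ?rpredB ?linform_dhomog ?X_dhomog. Qed.

(* The j-th column of the (constant) Jacobian matrix of lin_to_X. *)
Definition lin_to_X_col j : 'I_n -> F :=
  fun i => (i == j)%:R + (i == i0)%:R * ((l i0)^-1 * ((i0 == j)%:R - l j)).

Lemma mderiv_comp_lin_to_X p j :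
  (p \mPo lin_to_X)^`M(j) = dderiv (lin_to_X_col j) p \mPo lin_to_X.
Proof.
apply: dderiv_comp => i; apply: mderiv_subst_at.
by rewrite mderivZ mderivB mderivXU mderiv_linform -mpolyCB -mul_mpolyC -mpolyCM.
Qed.

Lemma dot_lin_to_X_col j : dot (lin_to_X_col j) l = (i0 == j)%:R.
Proof.
rewrite /dot /lin_to_X_col; under eq_bigr do rewrite mulrDl -mulrA !mulr_natl.
by rewrite big_split /= !sum_delta mulrAC mulVf // mul1r addrC subrK.
Qed.

Lemma foldr_mderiv_comp_lin_to_X p js :
  foldr (@mderiv n F) (p \mPo lin_to_X) js
  = iter_dderiv [seq lin_to_X_col j | j <- js] p \mPo lin_to_X.
Proof. by elim: js => //= j js ->; rewrite mderiv_comp_lin_to_X. Qed.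

End Straightening.

Lemma mcoeff_eq0_of_partials (R : numDomainType) n (h : {mpoly R[n]}) i0 r :
  (forall js : seq 'I_n, size js = r -> i0 \notin js -> foldr (@mderiv n R) h js = 0) ->
  forall m, (r <= mdeg m - m i0)%N -> h@_m = 0.
Proof.
elim: r h => [|r IHr] h hr m rm.
  by have h0 : h = 0 := hr [::] erefl isT; rewrite h0 mcoeff0.
have [j ji0 mj] : exists2 j, j != i0 & m j != 0%N.
  have : (0 < \sum_(j | j != i0) m j)%N.
    by move: rm; rewrite mdegE (bigD1 i0) //= addKn; apply: leq_trans.
  rewrite lt0n sum_nat_eq0 negb_forall => /existsP [j].
  by rewrite negb_imply => /andP[]; exists j.
pose m' := (m - U_(j))%MM.
have mE : m = (m' + U_(j))%MM by rewrite submK // lep1mP.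
have : (h^`M(j))@_m' = 0.
  apply: IHr => [js js_r i0js|].
    rewrite -[h^`M(j)]/(foldr (@mderiv n R) h [:: j]) -foldr_cat.
    by apply: hr; rewrite ?size_cat ?js_r ?addn1 // mem_cat mem_seq1 negb_or i0js eq_sym.
  move: rm; rewrite mE mdegD mdeg1 mnmDE mnm1E (negPf ji0) addn0; lia.
by rewrite mcoeff_mderiv -mE => /eqP; rewrite mulrn_eq0 orFb => /eqP.
Qed.

Lemma dhomog_factor_Xn (R : comNzRingType) n (h : {mpoly R[n]}) d i0 k :
  h \is d.-homog -> (forall m, h@_m != 0 -> (k <= m i0)%N) ->
  exists2 g : {mpoly R[n]}, g \is (d - k).-homog & h = 'X_i0 ^+ k * g.
Proof.
move=> /dhomogP hd hk.
have Uk m : m \in msupp h -> (U_(i0) *+ k <= m)%MM.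
  move=> mh; apply/mnm_lepP => i; rewrite mulmnE mnm1E.
  by case: eqP => [<-|_]; rewrite ?mul1n ?mul0n // hk // -mcoeff_msupp.
exists (\sum_(m <- msupp h) h@_m *: 'X_[m - U_(i0) *+ k]).
  rewrite big_seq; apply: rpred_sum => m mh; rewrite rpredZ // dhomogX; apply/eqP.
  have := mdegD (m - U_(i0) *+ k) (U_(i0) *+ k).
  by rewrite submK ?Uk // mdegMn mdeg1 mul1n (hd m mh) => ->; rewrite addnK.
rewrite mulr_sumr [LHS]mpolyE; apply: eq_big_seq => m mh.
by rewrite -scalerAr mpolyXn -mpolyXD addmC submK ?Uk.
Qed.

Lemma fr_neq0 (b : {poly CC}) : b.[0] != 0 -> fr b != 0.
Proof. by apply: contraNneq => /eqP; rewrite tofrac_eq0 => /eqP ->; rewrite horner0. Qed.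

Lemma lim0_unique x c c' : lim0 x c -> lim0 x c' -> c = c'.
Proof.
move=> [a [b [b0 [-> ->]]]] [a' [b' [b'0 [e ->]]]].
have /eqP : fr (a * b') = fr (a' * b).
  by rewrite /fr !tofracM; apply/eqP; rewrite -eqr_div ?fr_neq0 // e.
rewrite tofrac_eq => /eqP /(congr1 (horner^~ 0)); rewrite !hornerM => e0.
by apply/eqP; rewrite eqr_div // e0.
Qed.

Lemma lim0C c : lim0 (fr c%:P) c.
Proof. by exists c%:P, 1; rewrite /fr tofrac1 divr1 !hornerC divr1 oner_neq0. Qed.

Lemma lim00 : lim0 0 0.
Proof. by have := lim0C 0; rewrite /fr tofrac0. Qed.

Lemma lim0D x y c c' : lim0 x c -> lim0 y c' -> lim0 (x + y) (c + c').
Proof.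
move=> [a [b [b0 [-> ->]]]] [a' [b' [b'0 [-> ->]]]].
exists (a * b' + a' * b), (b * b'); rewrite hornerM mulf_neq0 //.
by rewrite /fr tofracD !tofracM hornerD !hornerM !addf_div ?fr_neq0.
Qed.

Lemma lim0M x y c c' : lim0 x c -> lim0 y c' -> lim0 (x * y) (c * c').
Proof.
move=> [a [b [b0 [-> ->]]]] [a' [b' [b'0 [-> ->]]]].
exists (a * a'), (b * b'); rewrite !hornerM mulf_neq0 //.
by rewrite /fr !tofracM !mulf_div.
Qed.

Lemma lim0Mn x c k : lim0 x c -> lim0 (x *+ k) (c *+ k).
Proof.
move=> xc; elim: k => [|k IHk]; first by rewrite !mulr0n; exact: lim00.
by rewrite !mulrS; exact: lim0D.
Qed.

Lemma lim0_sum (I : Type) (s : seq I) (P : pred I) (F : I -> Ceps) (G : I -> CC) :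
  (forall i, P i -> lim0 (F i) (G i)) ->
  lim0 (\sum_(i <- s | P i) F i) (\sum_(i <- s | P i) G i).
Proof. by move=> FG; elim/big_rec2: _ => [|i x y /FG]; [exact: lim00 | exact: lim0D]. Qed.

Definition mlim0 n (F : {mpoly Ceps[n]}) (f : {mpoly CC[n]}) := forall m, lim0 F@_m f@_m.

Definition vlim0 n (u : 'I_n -> Ceps) (v : 'I_n -> CC) := forall i, lim0 (u i) (v i).

Lemma mlim0_eq0 n (F : {mpoly Ceps[n]}) f : mlim0 F f -> F = 0 -> f = 0.
Proof.
move=> Ff F0; apply/mpolyP => m; rewrite mcoeff0; apply: lim0_unique (Ff m) _.
by rewrite F0 mcoeff0; exact: lim00.
Qed.

Lemma mlim0_dderiv n (F : {mpoly Ceps[n]}) f u v :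
  mlim0 F f -> vlim0 u v -> mlim0 (dderiv u F) (dderiv v f).
Proof.
move=> Ff uv m; rewrite /dderiv !raddf_sum; apply: lim0_sum => i _ /=.
by rewrite !mcoeffZ !mcoeff_mderiv; apply: lim0M; last exact: lim0Mn.
Qed.

Lemma mlim0_iter_dderiv n (I : Type) (U : I -> 'I_n -> Ceps) (V : I -> 'I_n -> CC)
    (F : {mpoly Ceps[n]}) f (s : seq I) :
  mlim0 F f -> (forall x, vlim0 (U x) (V x)) ->
  mlim0 (iter_dderiv (map U s) F) (iter_dderiv (map V s) f).
Proof. by move=> Ff UV; elim: s => //= x s IHs; apply: mlim0_dderiv. Qed.

(* With L = eps^q a / b, take u := v + lam e_i0 where lam := - (v . a) / a_i0: then
   u . a = 0, and lam -> 0 because (v . a)(0) is a multiple of v . l = 0. *)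
Lemma annihilator_approx n (L : 'I_n -> Ceps) (l v : 'I_n -> CC) i0 :
  l i0 != 0 -> proj_lim L l -> dot v l = 0 -> exists2 u, vlim0 u v & dot u L = 0.
Proof.
move=> li0 [q [w [c [[_ [a [b [b0 La wa]]]] c0 wl]]]] vl.
have a0 i : (a i).[0] = c * b.[0] * l i by rewrite mulrAC -wl wa divfK.
have ai0 : (a i0).[0] != 0 by rewrite a0 !mulf_neq0.
pose A := \sum_(i < n) v i *: a i.
pose lam := fr (- A) / fr (a i0).
have lam0 : lim0 lam 0.
  exists (- A), (a i0); do !split => //.
  rewrite hornerN horner_sum (eq_bigr (fun j => c * b.[0] * (v j * l j))) => [|j _].
    by rewrite -mulr_sumr -/(dot v l) vl mulr0 oppr0 mul0r.
  by rewrite hornerZ a0 mulrCA.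
exists (fun i => fr (v i)%:P + lam *+ (i == i0)).
  by move=> i; have := lim0D (lim0C (v i)) (lim0Mn (i == i0) lam0); rewrite mul0rn addr0.
have frA : \sum_(i < n) fr (v i)%:P * fr (a i) = fr A.
  by rewrite /fr /A rmorph_sum; apply: eq_bigr => i _; rewrite -rmorphM mul_polyC.
have lam_i0 : \sum_(i < n) lam *+ (i == i0) * fr (a i) = lam * fr (a i0).
  by under eq_bigr do rewrite mulrnAl; rewrite sum_delta.
rewrite /dot (eq_bigr (fun i => eps ^ q / fr b * ((fr (v i)%:P + lam *+ (i == i0)) * fr (a i)))).
  rewrite -mulr_sumr; under eq_bigr do rewrite mulrDl.
  by rewrite big_split /= frA lam_i0 divfK ?fr_neq0 // /fr tofracN subrr mulr0.
by move=> i _; rewrite La; ring.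
Qed.

Lemma local_border_decomp_annihilated n d r (f : {mpoly CC[n]}) l i0 :
  l i0 != 0 -> local_border_decomp d r f l ->
  forall vs, size vs = r -> all (fun v => dot v l == 0) vs -> iter_dderiv vs f = 0.
Proof.
move=> li0 [L [Ll Ff]] vs /eqP vs_r vsl.
pose V := Tuple vs_r.
have VL k : dot (tnth V k) l = 0.
  apply/eqP; rewrite (tnth_nth (fun=> 0)); move/(all_nthP (fun=> 0)): vsl.
  by apply; rewrite (eqP vs_r).
have [U UV UL] := fin_all_exists2 (fun k => annihilator_approx li0 (Ll k) (VL k)).
rewrite -[vs]/(tval V) -map_tnth_enum.
apply: mlim0_eq0 (mlim0_iter_dderiv _ Ff UV) _.
rewrite iter_dderiv_sum big1 // => k _.
have [c -> c0] := iter_dderiv_linform_exp (map U (enum 'I_r)) (L k) d.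
rewrite c0 ?scale0r // has_map; apply/hasP; exists k; first by rewrite mem_enum.
by rewrite /= UL.
Qed.

Unset Implicit Arguments.

Theorem lemma7 (n d r : nat) (f : {mpoly CC[n]}) (l : 'I_n -> CC) :
  f \is d.-homog ->
  (exists i, l i != 0) ->
  local_border_decomp d r f l ->
  (r.-1 <= d)%N ->
  exists g : {mpoly CC[n]},
    g \is r.-1.-homog /\ f = linform l ^+ (d.+1 - r) * g.
Proof.
move=> fd [i0 li0] fdec rd.
pose h := f \mPo lin_to_X l i0.
have hd : h \is d.-homog by apply: comp_mpoly_dhomog fd => i; exact: lin_to_X_dhomog.
have h_partials js : size js = r -> i0 \notin js -> foldr (@mderiv n CC) h js = 0.
  move=> js_r i0js; rewrite foldr_mderiv_comp_lin_to_X.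
  rewrite (local_border_decomp_annihilated li0 fdec) ?size_map ?raddf0 // all_map.
  apply/allP => j jjs /=; rewrite dot_lin_to_X_col // pnatr_eq0 eqb0.
  by apply: contraNneq i0js => ->.
have [g gd hE] : exists2 g, g \is (d - (d.+1 - r)).-homog & h = 'X_i0 ^+ (d.+1 - r) * g.
  apply: (dhomog_factor_Xn hd) => m hm.
  have md : mdeg m = d by apply: (dhomog_mf hd); rewrite mcoeff_msupp.
  rewrite leqNgt; apply: contra hm => mi0; apply/eqP.
  by apply: (mcoeff_eq0_of_partials h_partials); lia.
exists (g \mPo X_to_lin l i0); split.
  (* by truncated subtraction this also holds for r = 0 *)
  have -> : r.-1 = (d - (d.+1 - r))%N by lia.
  exact: comp_mpoly_dhomog (X_to_lin_dhomog l i0) gd.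
by rewrite -(comp_lin_to_XK li0 f) -/h hE rmorphM rmorphXn /= comp_X_to_lin_X.
Qed.
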